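(* Let $d\ge2$ and $1\le N\le M$ be integers with $d\mid(M-N)$. For $\boldsymbol\theta=(\theta_1,\dots,\theta_{d-1})\in[0,2\pi)^{d-1}$ let $U_{\boldsymbol\theta}=|0\rangle\langle0|+\sum_{k=1}^{d-1}e^{-i\theta_k}|k\rangle\langle k|$ and $|e_{\boldsymbol\theta}\rangle=d^{-1/2}\big(|0\rangle+\sum_{k=1}^{d-1}e^{-i\theta_k}|k\rangle\big)$. Then there exist a finite-dimensional Hilbert space $\mathcal H_A$, a state $\sigma$ on $(\mathbb C^d)^{\otimes N}\otimes\mathcal H_A\otimes(\mathbb C^d)^{\otimes M}$ and a quantum channel $\mathcal C$ from $(\mathbb C^d)^{\otimes N}\otimes\mathcal H_A\otimes(\mathbb C^d)^{\otimes M}$ to $(\mathbb C^d)^{\otimes M}$ such that for all $\boldsymbol\theta$, $$\langle e_{\boldsymbol\theta}|^{\otimes M}\,\mathcal C\big((U_{\boldsymbol\theta}^{\otimes N}\otimes I)\sigma(U_{\boldsymbol\theta}^{\otimes N}\otimes I)^\dagger\big)\,|e_{\boldsymbol\theta}\rangle^{\otimes M}\ge1-2(M+1)^{\frac{d(d-1)}{2}}\exp\!\Big[-\frac{2N^2}{d^2M}\Big].$$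
   Context: $\{|0\rangle,\dots,|d-1\rangle\}$ is the computational basis of $\mathbb C^d$; $U_{\boldsymbol\theta}^{\otimes N}$ acts on the factor $(\mathbb C^d)^{\otimes N}$ and $I$ on the remaining factors. *)

From Stdlib Require Import Reals.
From mathcomp Require Import all_boot.
Set Implicit Arguments.
Local Open Scope R_scope. Unset Strict Implicit. Unset Printing Implicit Defensive.

Record C := mkC { re : R; im : R }.
Definition C0 : C := mkC 0 0.
Definition C1 : C := mkC 1 0.
Definition RtoC (r : R) : C := mkC r 0.
Definition Cadd (z w : C) : C := mkC (re z + re w) (im z + im w).
Definition Cmul (z w : C) : C :=
  mkC (re z * re w - im z * im w) (re z * im w + im z * re w).
Definition Cconj (z : C) : C := mkC (re z) (- im z).
Definition Cexpi (t : R) : C := mkC (cos t) (sin t).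

Definition csum (T : finType) (f : T -> C) : C :=
  foldr (fun x acc => Cadd (f x) acc) C0 (enum T).
Definition cprod (T : finType) (f : T -> C) : C :=
  foldr (fun x acc => Cmul (f x) acc) C1 (enum T).

Definition Mat (T : finType) := T -> T -> C.
Definition Vec (T : finType) := T -> C.

Definition Mmul (T : finType) (A B : Mat T) : Mat T :=
  fun i j => csum (fun k => Cmul (A i k) (B k j)).
Definition Madj (T : finType) (A : Mat T) : Mat T := fun i j => Cconj (A j i).
Definition Mid (T : finType) : Mat T := fun i j => if i == j then C1 else C0.
Definition Mtrace (T : finType) (A : Mat T) : C := csum (fun i => A i i).
(* tensor product: C^S (x) C^T = C^(S * T) *)
Definition kron (S T : finType) (A : Mat S) (B : Mat T) : Mat (S * T)%type :=
  fun x y => Cmul (A x.1 y.1) (B x.2 y.2).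
(* N-fold tensor power: (C^T)^{(x) N} = C^({ffun 'I_N -> T}) *)
Definition Mtpow (T : finType) (N : nat) (A : Mat T) : Mat {ffun 'I_N -> T} :=
  fun x y => cprod (fun k : 'I_N => A (x k) (y k)).
Definition Vtpow (T : finType) (N : nat) (v : Vec T) : Vec {ffun 'I_N -> T} :=
  fun x => cprod (fun k : 'I_N => v (x k)).
Definition braket (T : finType) (v : Vec T) (A : Mat T) : C :=
  csum (fun i => csum (fun j => Cmul (Cconj (v i)) (Cmul (A i j) (v j)))).

Definition PSD (T : finType) (A : Mat T) : Prop :=
  forall v : Vec T, im (braket v A) = 0 /\ (0 <= re (braket v A)).
Definition is_state (T : finType) (rho : Mat T) : Prop :=
  PSD rho /\ Mtrace rho = C1.

Definition is_linear_map (S T : finType) (Phi : Mat S -> Mat T) : Prop :=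
  forall (a : C) (X Y : Mat S) (i j : T),
    Phi (fun k l => Cadd (Cmul a (X k l)) (Y k l)) i j
    = Cadd (Cmul a (Phi X i j)) (Phi Y i j).
(* id_k (x) Phi acting on C^('I_k * S) *)
Definition ext_id (k : nat) (S T : finType) (Phi : Mat S -> Mat T)
  (X : Mat ('I_k * S)%type) : Mat ('I_k * T)%type :=
  fun x y => Phi (fun s s' => X (x.1, s) (y.1, s')) x.2 y.2.
Definition is_channel (S T : finType) (Phi : Mat S -> Mat T) : Prop :=
  [/\ is_linear_map Phi,
      (forall X : Mat S, Mtrace (Phi X) = Mtrace X) &
      (forall (k : nat) (X : Mat ('I_k * S)%type), PSD X -> PSD (ext_id Phi X))].

(* theta : nat -> R; only theta 1, ..., theta (d-1) are used.
   phase k = 1 for k = 0, e^{-i theta_k} for 1 <= k <= d-1. *)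
Definition phase (theta : nat -> R) (k : nat) : C :=
  if k == 0%N then C1 else Cexpi (- theta k).
Definition Utheta (d : nat) (theta : nat -> R) : Mat 'I_d :=
  fun i j => if i == j then phase theta i else C0.
Definition etheta (d : nat) (theta : nat -> R) : Vec 'I_d :=
  fun k => Cmul (RtoC (/ sqrt (INR d))) (phase theta k).

Arguments Mid : clear implicits.
Arguments Utheta : clear implicits.
Arguments etheta : clear implicits.
Arguments Mtpow {T} N A _ _.
Arguments Vtpow {T} N v _.

(* Let c = (M - N) / d and call a word y in {0, ..., d-1}^M admissible
   ([min_count_ge c y]) when every letter occurs at least c times in y; its surplus is
   the word of length N left after deleting c occurrences of each letter.  The probe is
   the uniform superposition, over the n admissible words y, of |surplus y>|y>, with a
   trivial ancilla.  After U_theta^(x)N acts on the first register, the controlled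
   transposition exchanging a fixed |x0> with |surplus y>, followed by the partial trace
   over the first register, leaves the pure state n^(-1/2) sum_y e^(-i theta(surplus y)) |y>.
   The phase of an admissible y is that of its surplus times the phase of c copies of
   every letter, which is common to all admissible y, so the overlap with |e_theta>^(x)M
   has squared modulus exactly n / d^M.  The Chernoff-Hoeffding bound for the number of
   occurrences of each letter and a union bound over the d letters show that at most
   d^(M+1) exp(-2 N^2 / (d^2 M)) words are not admissible, and d <= 2 (M+1)^(d(d-1)/2). *)

From Stdlib Require Import Reals Lra FunctionalExtensionality.
From Coquelicot Require Import Hierarchy Continuity Derive AutoDerive.
From HB Require Import structures.
From mathcomp Require Import all_boot all_algebra perm.
From mathcomp Require Import Rstruct.

Set Implicit Arguments.
Unset Strict Implicit.
Unset Printing Implicit Defensive.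

Local Open Scope R_scope.

(** * Hoeffding's lemma *)

Lemma le_of_derive_ge0 (f df : R -> R) (u : R) : 0 <= u ->
  (forall x, 0 <= x <= u -> is_derive f x (df x)) ->
  (forall x, 0 <= x <= u -> 0 <= df x) -> f 0 <= f u.
Proof.
move=> u_ge0 f_df df_ge0.
case: (Rle_lt_or_eq_dec 0 u u_ge0) => [u_gt0|<-]; last lra.
have min0 : Rmin 0 u = 0 by apply: Rmin_left; lra.
have maxu : Rmax 0 u = u by apply: Rmax_right; lra.
have [||c [] ] := MVT_gen f 0 u df; rewrite ?min0 ?maxu.
- by move=> x x_in; apply: f_df; lra.
- move=> x x_in; apply/continuity_pt_filterlim.
  by apply: (@ex_derive_continuous R_AbsRing R_NormedModule); eexists; apply: f_df.
- by move=> c_in mvt; have := df_ge0 c ltac:(lra); nra.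
Qed.

Lemma hoeffding_bernoulli (p u : R) : 0 <= p <= 1 -> 0 <= u ->
  1 - p + p * exp (- u) <= exp (u ^ 2 / 8 - u * p).
Proof.
move=> p01 u_ge0.
pose q x := 1 - p + p * exp (- x).
have q_gt0 x : 0 < q x by rewrite /q; have := exp_pos (- x); nra.
(* phi x := x^2/8 - x p - ln (q x) has phi'' = (q - 2 p e^-x)^2 / (4 q^2) >= 0,
   so phi' >= phi'(0) = 0 and phi >= phi(0) = 0 on [0, u]. *)
pose dphi x := x / 4 - p + p * exp (- x) / q x.
have dphi_ge0 x : 0 <= x -> 0 <= dphi x.
  move=> x_ge0; have <- : dphi 0 = 0 by rewrite /dphi /q Ropp_0 exp_0; field; lra.
  apply: (le_of_derive_ge0 (f := dphi)
            (df := fun x => (q x - 2 * p * exp (- x)) ^ 2 / (4 * q x ^ 2))) => //.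
    by move=> y _; have := q_gt0 y; rewrite /dphi /q => qy; auto_derive; [lra|field; lra].
  move=> y _; have := q_gt0 y => qy.
  apply: Rmult_le_pos; first exact: pow2_ge_0.
  by apply/Rlt_le/Rinv_0_lt_compat/Rmult_lt_0_compat; [lra|apply: pow_lt].
have : 0 <= u ^ 2 / 8 - u * p - ln (q u).
  have <- : 0 ^ 2 / 8 - 0 * p - ln (q 0) = 0.
    by rewrite /q Ropp_0 exp_0 (_ : 1 - p + p * 1 = 1) ?ln_1; [field|ring].
  apply: (le_of_derive_ge0 (f := fun x => x ^ 2 / 8 - x * p - ln (q x)) (df := dphi)) => // x x_in.
    by have := q_gt0 x; rewrite /dphi /q => qx; auto_derive; [lra|field; lra].
  by apply: dphi_ge0; lra.
move=> le_ln; rewrite -[X in X <= _](exp_ln (q u)) //.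
by case: (Rle_lt_or_eq_dec (ln (q u)) (u ^ 2 / 8 - u * p)) => [|/exp_increasing|<-]; lra.
Qed.

Lemma exp_pow (a : R) (n : nat) : exp a ^ n = exp (INR n * a).
Proof.
elim: n => [|n IH]; first by rewrite Rmult_0_l exp_0.
by rewrite [LHS]/= IH -exp_plus S_INR; congr exp; ring.
Qed.

(* The Chernoff bound for a letter of frequency 1/d, with the parameter l = 4 N / (d m)
   that minimises the exponent given by Hoeffding's lemma. *)
Lemma chernoff_hoeffding (d N c : R) (m : nat) :
  1 <= d -> 0 < INR m -> 0 <= N -> c * d + N = INR m ->
  exp (4 * N / (d * INR m) * c) * (exp (- (4 * N / (d * INR m))) + d - 1) ^ m
  <= d ^ m * exp (- (2 * N ^ 2) / (d ^ 2 * INR m)).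
Proof.
move=> d_ge1 m_gt0 N_ge0 cdN.
set l := 4 * N / (d * INR m).
have l_ge0 : 0 <= l.
  by apply: Rmult_le_pos; [lra|apply/Rlt_le/Rinv_0_lt_compat/Rmult_lt_0_compat; lra].
have invd01 : 0 <= / d <= 1.
  by split; [apply/Rlt_le/Rinv_0_lt_compat; lra|rewrite -Rinv_1; apply: Rinv_le_contravar; lra].
have mgf_le : (exp (- l) + d - 1) ^ m <= d ^ m * exp (INR m * (l ^ 2 / 8 - l * / d)).
  rewrite -exp_pow -Rpow_mult_distr; apply: pow_incr; split.
    by have := exp_pos (- l); lra.
  rewrite (_ : exp (- l) + d - 1 = d * (1 - / d + / d * exp (- l))); last by field; lra.
  by apply: Rmult_le_compat_l; [lra|exact: hoeffding_bernoulli].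
apply: Rle_trans (Rmult_le_compat_l _ _ _ (Rlt_le _ _ (exp_pos _)) mgf_le) _.
rewrite -Rmult_assoc (Rmult_comm (exp _)) Rmult_assoc -exp_plus.
apply/Rmult_le_compat_l; first by apply: pow_le; lra.
right; congr exp; rewrite /l (_ : c = (INR m - N) / d); first by field; lra.
by field_simplify_eq; lra.
Qed.

Lemma scaled_inv_sqrt_sq (n d : R) (M : nat) : 0 < n -> 0 < d ->
  n * (/ sqrt d) ^ M * / sqrt n * (n * (/ sqrt d) ^ M * / sqrt n) = n / d ^ M.
Proof.
move=> n_gt0 d_gt0.
have sqrt_d_pow : (sqrt d) ^ M * (sqrt d) ^ M = d ^ M by rewrite -Rpow_mult_distr sqrt_sqrt //; lra.
have := sqrt_lt_R0 _ n_gt0; have := sqrt_lt_R0 _ d_gt0; have := sqrt_sqrt n (Rlt_le _ _ n_gt0).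
move=> sqrt_n sqrt_d_gt0 sqrt_n_gt0; have := pow_lt _ M sqrt_d_gt0 => pow_gt0.
rewrite pow_inv -sqrt_d_pow; set q := sqrt d ^ M in pow_gt0 *.
set r := sqrt n in sqrt_n sqrt_n_gt0 *; rewrite -sqrt_n; field; lra.
Qed.

Local Close Scope R_scope.
Import GRing.Theory Num.Theory.
Local Open Scope ring_scope.

(** * Complex numbers *)

Definition C_to_pair (z : C) : R * R := (re z, im z).
Definition pair_to_C (p : R * R) : C := mkC p.1 p.2.
Lemma C_to_pairK : cancel C_to_pair pair_to_C. Proof. by case. Qed.
HB.instance Definition _ := Equality.copy C (can_type C_to_pairK).
HB.instance Definition _ := Choice.copy C (can_type C_to_pairK).

Definition Copp (z : C) : C := mkC (- re z) (- im z).

Lemma C_ext (z w : C) : re z = re w -> im z = im w -> z = w.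
Proof. by case: z; case: w => ? ? ? ? /= -> ->. Qed.

Lemma CaddA : associative Cadd. Proof. by move=> x y z; apply: C_ext => /=; ring. Qed.
Lemma CaddC : commutative Cadd. Proof. by move=> x y; apply: C_ext => /=; ring. Qed.
Lemma Cadd0 : left_id C0 Cadd. Proof. by move=> x; apply: C_ext => /=; ring. Qed.
Lemma CaddN : left_inverse C0 Copp Cadd. Proof. by move=> x; apply: C_ext => /=; ring. Qed.
HB.instance Definition _ := GRing.isZmodule.Build C CaddA CaddC Cadd0 CaddN.

Lemma CmulA : associative Cmul. Proof. by move=> x y z; apply: C_ext => /=; ring. Qed.
Lemma CmulC : commutative Cmul. Proof. by move=> x y; apply: C_ext => /=; ring. Qed.
Lemma Cmul1 : left_id C1 Cmul. Proof. by move=> x; apply: C_ext => /=; ring. Qed.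
Lemma CmulDl : left_distributive Cmul Cadd.
Proof. by move=> x y z; apply: C_ext => /=; ring. Qed.
Lemma C1_neq0 : C1 != C0. Proof. by apply/eqP => /(f_equal re) /=; lra. Qed.
HB.instance Definition _ :=
  GRing.Zmodule_isComNzRing.Build C CmulA CmulC Cmul1 CmulDl C1_neq0.

Lemma re_is_zmod_morphism : zmod_morphism re. Proof. by []. Qed.
HB.instance Definition _ := GRing.isZmodMorphism.Build C R re re_is_zmod_morphism.
Lemma im_is_zmod_morphism : zmod_morphism im. Proof. by []. Qed.
HB.instance Definition _ := GRing.isZmodMorphism.Build C R im im_is_zmod_morphism.

Lemma Cconj_is_zmod_morphism : zmod_morphism Cconj.
Proof. by move=> x y; apply: C_ext => /=; rewrite /GRing.add /=; ring. Qed.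
Lemma Cconj_is_monoid_morphism : monoid_morphism Cconj.
Proof. by split=> [|x y]; apply: C_ext => /=; rewrite /GRing.mul /GRing.one /=; ring. Qed.
HB.instance Definition _ := GRing.isZmodMorphism.Build C C Cconj Cconj_is_zmod_morphism.
HB.instance Definition _ := GRing.isMonoidMorphism.Build C C Cconj Cconj_is_monoid_morphism.

Lemma RtoC_is_zmod_morphism : zmod_morphism RtoC.
Proof. by move=> x y; apply: C_ext => //=; ring. Qed.
Lemma RtoC_is_monoid_morphism : monoid_morphism RtoC.
Proof. by split=> [|x y]; apply: C_ext => //=; rewrite -?RmultE; ring. Qed.
HB.instance Definition _ := GRing.isZmodMorphism.Build R C RtoC RtoC_is_zmod_morphism.
HB.instance Definition _ := GRing.isMonoidMorphism.Build R C RtoC RtoC_is_monoid_morphism.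

Lemma CconjK : involutive Cconj. Proof. by move=> z; apply: C_ext => /=; ring. Qed.
Lemma Cconj_RtoC (r : R) : Cconj (RtoC r) = RtoC r. Proof. by apply: C_ext => /=; ring. Qed.

Lemma csumE (T : finType) (f : T -> C) : csum f = \sum_x f x.
Proof.
by rewrite /csum -big_enum; elim: (enum T) => [|a s IH]; rewrite ?big_nil ?big_cons /= ?IH.
Qed.
Lemma cprodE (T : finType) (f : T -> C) : cprod f = \prod_x f x.
Proof.
by rewrite /cprod -big_enum; elim: (enum T) => [|a s IH]; rewrite ?big_nil ?big_cons /= ?IH.
Qed.

Lemma sum_if_const (T : finType) (P : pred T) (z : C) :
  \sum_x (if P x then z else 0) = z *+ #|[pred x | P x]|.
Proof. by rewrite -big_mkcond sumr_const. Qed.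

Definition unimodular (z : C) : Prop := Cconj z * z = 1.

Lemma unimodular_phase (theta : nat -> R) (a : nat) : unimodular (phase theta a).
Proof.
rewrite /unimodular /phase; case: (a == 0)%N; apply: C_ext => /=;
  rewrite ?Rmult_1_l ?Rmult_0_l; try ring.
by have := sin2_cos2 (- theta a); rewrite /Rsqr; lra.
Qed.

Lemma unimodular_conj (z : C) : unimodular z -> unimodular (Cconj z).
Proof. by rewrite /unimodular CconjK mulrC. Qed.

Lemma unimodular_prod (I : Type) (r : seq I) (P : pred I) (F : I -> C) :
  (forall i, unimodular (F i)) -> unimodular (\prod_(i <- r | P i) F i).
Proof.
move=> F_unit; apply: (big_ind unimodular); first by rewrite /unimodular rmorph1 mulr1.
  by move=> x y x_unit y_unit; rewrite /unimodular rmorphM mulrACA x_unit y_unit mulr1.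
by move=> i _; apply: F_unit.
Qed.

Lemma unimodularX (z : C) (n : nat) : unimodular z -> unimodular (z ^+ n).
Proof. by move=> z_unit; rewrite /unimodular rmorphXn -exprMn z_unit expr1n. Qed.

Lemma RtoC_mul_unimodular (r : R) (u : C) : unimodular u ->
  (RtoC r * u) * Cconj (RtoC r * u) = RtoC (r * r).
Proof.
move=> u_unit; rewrite [Cconj _]rmorphM /= Cconj_RtoC mulrACA [u * _]mulrC u_unit mulr1.
by rewrite -rmorphM.
Qed.

(** * Pure states and channels *)

Definition outer (T : finType) (psi : Vec T) : Mat T := fun i j => psi i * Cconj (psi j).
Definition dotC (T : finType) (v w : Vec T) : C := \sum_i Cconj (v i) * w i.
Definition diagm (T : finType) (w : T -> C) : Mat T := fun i j => if i == j then w i else 0.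

Lemma braketE (T : finType) (v : Vec T) (A : Mat T) :
  braket v A = \sum_i \sum_j Cconj (v i) * (A i j * v j).
Proof. by rewrite /braket csumE; apply: eq_bigr => i _; rewrite csumE. Qed.

Lemma braket_outer (T : finType) (v psi : Vec T) :
  braket v (outer psi) = dotC v psi * Cconj (dotC v psi).
Proof.
rewrite braketE rmorph_sum mulr_suml; apply: eq_bigr => i _.
rewrite mulr_sumr; apply: eq_bigr => j _.
by rewrite rmorphM /= CconjK /outer -!mulrA [Cconj (psi j) * _]mulrC.
Qed.

Lemma outer_PSD (T : finType) (psi : Vec T) : PSD (outer psi).
Proof.
by move=> v; rewrite braket_outer; split; rewrite /= /GRing.mul /=; [ring|nra].
Qed.

Lemma braket_comp (I J : finType) (h : I -> J) (v : Vec I) (X : Mat J) :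
  braket v (fun i j => X (h i) (h j)) = braket (fun a => \sum_(i | h i == a) v i) X.
Proof.
have part F : \sum_i F i (h i) = \sum_a \sum_(i | h i == a) F i a :> C.
  by rewrite (partition_big h predT) //=; apply: eq_bigr => a _; apply: eq_bigr => i /eqP ->.
rewrite !braketE.
under eq_bigr => i _ do rewrite (part (fun j b => Cconj (v i) * (X (h i) b * v j))).
rewrite (part (fun i a => \sum_b \sum_(j | h j == b) Cconj (v i) * (X a b * v j))).
apply: eq_bigr => a _; rewrite exchange_big /=; apply: eq_bigr => b _.
by rewrite rmorph_sum mulr_suml; apply: eq_bigr => i _; rewrite !mulr_sumr.
Qed.

Lemma PSD_comp (I J : finType) (h : I -> J) (X : Mat J) :
  PSD X -> PSD (fun i j => X (h i) (h j)).
Proof. by move=> X_psd v; rewrite braket_comp; apply: X_psd. Qed.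

Lemma PSD_sum (I P : finType) (Y : P -> Mat I) :
  (forall p, PSD (Y p)) -> PSD (fun i j => \sum_p Y p i j).
Proof.
move=> Y_psd v.
have -> : braket v (fun i j => \sum_p Y p i j) = \sum_p braket v (Y p).
  rewrite braketE; under eq_bigr => i _ do under eq_bigr => j _ do rewrite mulr_suml mulr_sumr.
  under eq_bigr => i _ do rewrite exchange_big.
  by rewrite exchange_big; apply: eq_bigr => p _; rewrite braketE.
rewrite raddf_sum raddf_sum; split; first by rewrite big1 // => p _; case: (Y_psd p v).
by apply/RleP/sumr_ge0 => p _; apply/RleP; case: (Y_psd p v).
Qed.

Lemma MmulE (T : finType) (A B : Mat T) (i j : T) : Mmul A B i j = \sum_k A i k * B k j.
Proof. exact: csumE. Qed.

Lemma diagmM_outer (T : finType) (w : T -> C) (psi : Vec T) :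
  Mmul (Mmul (diagm w) (outer psi)) (Madj (diagm w)) = outer (fun i => w i * psi i).
Proof.
apply: functional_extensionality => i; apply: functional_extensionality => j.
rewrite MmulE (bigD1 j) //= big1 => [|k /negbTE kj]; last first.
  by rewrite /Madj /diagm eq_sym kj rmorph0 mulr0.
rewrite MmulE (bigD1 i) //= big1 => [|k /negbTE ki]; last by rewrite /diagm eq_sym ki mul0r.
by rewrite /Madj /diagm !eqxx !addr0 /outer rmorphM /= -!mulrA [Cconj (w j) * _]mulrC.
Qed.

Lemma diagm_kron (S T : finType) (a : S -> C) (b : T -> C) :
  kron (diagm a) (diagm b) = diagm (fun x => a x.1 * b x.2).
Proof.
apply: functional_extensionality => -[s t]; apply: functional_extensionality => -[s' t'].
rewrite /kron /diagm /= xpair_eqE.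
by case: (s == s'); case: (t == t') => /=; [|exact: mulr0|exact: mul0r|exact: mul0r].
Qed.

Lemma Mid_diagm (T : finType) : Mid T = diagm (fun=> 1).
Proof. by []. Qed.

Lemma Mtpow_diagm (T : finType) (N : nat) (w : T -> C) :
  Mtpow N (diagm w) = diagm (fun x : {ffun 'I_N -> T} => \prod_k w (x k)).
Proof.
apply: functional_extensionality => x; apply: functional_extensionality => y.
rewrite /Mtpow /diagm cprodE; case: eqP => [<-|/eqP xy].
  by apply: eq_bigr => k _; rewrite eqxx.
have [k xky] : exists k, x k != y k.
  by apply/existsP; apply: contraR xy => /existsPn xy; apply/eqP/ffunP => k; apply/eqP/negbNE.
by rewrite (bigD1 k) //= (negbTE xky) mul0r.
Qed.

Definition ptrace_perm (P Q S : finType) (pi : P * Q -> S) (X : Mat S) : Mat Q :=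
  fun q q' => \sum_p X (pi (p, q)) (pi (p, q')).

Lemma ptrace_perm_channel (P Q S : finType) (pi : P * Q -> S) :
  bijective pi -> is_channel (ptrace_perm pi).
Proof.
move=> pi_bij; split.
- by move=> a X Y i j; rewrite /ptrace_perm big_split /=; congr (_ + _); symmetry; exact: mulr_sumr.
- move=> X; rewrite /Mtrace !csumE /ptrace_perm exchange_big pair_big /=.
  by rewrite (reindex pi) /=; [apply: eq_bigr => -[]|exact: onW_bij].
- move=> k X X_psd.
  exact: (PSD_sum (fun p => PSD_comp (fun i : 'I_k * Q => (i.1, pi (p, i.2))) X_psd)).
Qed.

Lemma ptrace_perm_outer (P Q S : finType) (pi : P * Q -> S) (phi : Vec S) (chi : Vec Q)
    (x0 : P) :
  (forall x y, phi (pi (x, y)) = if x == x0 then chi y else 0) ->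
  ptrace_perm pi (outer phi) = outer chi.
Proof.
move=> phi_pi; apply: functional_extensionality => y; apply: functional_extensionality => y'.
rewrite /ptrace_perm /outer (bigD1 x0) //= big1 => [|x /negbTE x_neq]; last first.
  by rewrite !phi_pi x_neq mul0r.
by rewrite !phi_pi eqxx addr0.
Qed.

(** * Counting words by letter multiplicities *)

Lemma prod_seq_count (R : comPzSemiRingType) (T : finType) (s : seq T) (F : T -> R) :
  \prod_(a <- s) F a = \prod_k F k ^+ count_mem k s.
Proof.
elim: s => [|x s IH]; first by rewrite big_nil big1 // => k _; rewrite expr0.
rewrite big_cons IH (bigD1 x) //= [in RHS](bigD1 x) //= eqxx exprS mulrA.
by congr (_ * _); apply: eq_bigr => k /negbTE kx; rewrite eq_sym kx.
Qed.

Lemma sum_count_mem (T : finType) (s : seq T) : (\sum_k count_mem k s)%N = size s.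
Proof.
elim: s => [|x s IH] /=; first by rewrite big1.
rewrite big_split /= IH (bigD1 x) //= eqxx big1 // => k /negbTE.
by rewrite eq_sym => ->.
Qed.

Lemma codom_nth_ffun (T : eqType) (n : nat) (x0 : T) (s : seq T) :
  size s = n -> codom [ffun i : 'I_n => nth x0 s i] = s.
Proof.
move=> size_s; rewrite codomE -{2}(mkseq_nth x0 s) size_s /mkseq -val_enum_ord -map_comp.
by apply: eq_map => i; rewrite /= ffunE.
Qed.

Lemma prod_codom (R : comPzSemiRingType) (T : finType) (n : nat) (F : T -> R)
    (x : {ffun 'I_n -> T}) :
  \prod_i F (x i) = \prod_(a <- codom x) F a.
Proof. by rewrite codomE big_map big_enum. Qed.

Definition blocks (d : nat) (n : 'I_d -> nat) : seq 'I_d :=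
  flatten [seq nseq (n j) j | j <- enum 'I_d].

Lemma count_blocks (d : nat) (n : 'I_d -> nat) (k : 'I_d) : count_mem k (blocks n) = n k.
Proof.
rewrite /blocks count_flatten sumnE !big_map (bigD1 k) //= count_nseq /= eqxx mul1n.
by rewrite big1 ?addn0 // => j /negbTE; rewrite count_nseq /= eq_sym => ->.
Qed.

Lemma size_blocks (d : nat) (n : 'I_d -> nat) : size (blocks n) = (\sum_j n j)%N.
Proof. by rewrite -sum_count_mem; apply: eq_bigr => k _; rewrite count_blocks. Qed.

Lemma card_predE (T : finType) (P : pred T) : #|[pred x | P x]| = (\sum_x P x)%N.
Proof. by rewrite -sum1_card big_mkcond /=; apply: eq_bigr => x _; rewrite inE; case: (P x). Qed.

Definition min_count_ge (d M c : nat) (y : {ffun 'I_M -> 'I_d}) : bool :=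
  [forall k, c <= count_mem k (codom y)]%N.

Lemma exists_min_count_ge (d M c : nat) : (0 < d)%N -> (c * d <= M)%N ->
  exists y : {ffun 'I_M -> 'I_d}, min_count_ge c y.
Proof.
move=> d_gt0 cd_le_M; pose k0 : 'I_d := Ordinal d_gt0.
pose s := nseq (M - c * d) k0 ++ blocks (fun=> c).
have size_s : size s = M.
  by rewrite size_cat size_nseq size_blocks sum_nat_const card_ord [(d * c)%N]mulnC subnK.
exists [ffun i : 'I_M => nth k0 s i]; apply/forallP => k.
by rewrite codom_nth_ffun // count_cat count_blocks leq_addl.
Qed.

Lemma card_not_min_count_ge (d M c : nat) :
  (#|[pred y : {ffun 'I_M -> 'I_d} | ~~ min_count_ge c y]|
   <= \sum_k #|[pred y : {ffun 'I_M -> 'I_d} | count_mem k (codom y) < c]|)%N.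
Proof.
rewrite card_predE (eq_bigr _ (fun k _ => card_predE _)) exchange_big /=.
apply: leq_sum => y _; case: (boolP (min_count_ge c y)) => //= /forallPn [k].
by rewrite -ltnNge (bigD1 k) //= => ->.
Qed.

(* The right-hand side is sum_y exp (l (c - count_mem k (codom y))). *)
Lemma card_count_lt_mgf (d M c : nat) (k : 'I_d) (l : R) : 0 <= l ->
  INR #|[pred y : {ffun 'I_M -> 'I_d} | count_mem k (codom y) < c]%N|
  <= exp (l * INR c) * (exp (- l) + INR d - 1) ^+ M.
Proof.
move=> l_ge0.
pose F a := if a == k then exp (- l) else 1.
have sumF : \sum_a F a = exp (- l) + INR d - 1.
  rewrite (bigD1 k) //= {1}/F eqxx (eq_bigr (fun=> 1)) => [|a /negbTE ak]; last by rewrite /F ak.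
  have d_gt0 : (0 < d)%N by apply: leq_ltn_trans (ltn_ord k).
  by rewrite sumr_const cardC1 card_ord INRE -addrA -(natrB _ d_gt0) subn1.
have prodF (y : {ffun 'I_M -> 'I_d}) : \prod_i F (y i) = exp (- l) ^+ count_mem k (codom y).
  rewrite prod_codom prod_seq_count (bigD1 k) //= big1 => [|a /negbTE ak].
    by rewrite /F eqxx mulr1.
  by rewrite /F ak expr1n.
have sum_prodF : \sum_(y : {ffun 'I_M -> 'I_d}) \prod_i F (y i) = (\sum_a F a) ^+ M.
  by rewrite -(bigA_distr_bigA (fun (i : 'I_M) a => F a)) prodr_const card_ord.
rewrite -sumF -sum_prodF mulr_sumr.
rewrite INRE card_predE natr_sum; apply: ler_sum => y _.
rewrite prodF -RpowE exp_pow -[X in _ <= X]RmultE -exp_plus.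
case: ltnP => [/ssrnat.leP/le_INR count_lt|_]; last by apply/RleP/Rlt_le/exp_pos.
rewrite mulr1n; apply/RleP/(Rle_trans _ _ _ _ (exp_ineq1_le _)).
by rewrite S_INR in count_lt; move/RleP: l_ge0; rewrite -R0E -R1E; nra.
Qed.

Section StringCounting.
Local Open Scope R_scope.
Variables (d N M c : nat).
Hypotheses (d_ge1 : (1 <= d)%N) (M_gt0 : (0 < M)%N) (cdN : (c * d + N = M)%N).

Let tail := exp (- (2 * INR N ^ 2) / (INR d ^ 2 * INR M)).

Lemma card_count_lt_hoeffding (k : 'I_d) :
  INR #|[pred y : {ffun 'I_M -> 'I_d} | count_mem k (codom y) < c]%N| <= INR d ^ M * tail.
Proof.
have d_ge1' : 1 <= INR d by apply: (le_INR 1); apply/ssrnat.leP.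
have M_gt0' : 0 < INR M by apply: lt_0_INR; apply/ssrnat.ltP.
have l_ge0 : 0 <= 4 * INR N / (INR d * INR M).
  apply: Rmult_le_pos; first by have := pos_INR N; lra.
  by apply/Rlt_le/Rinv_0_lt_compat/Rmult_lt_0_compat; lra.
apply: Rle_trans (chernoff_hoeffding d_ge1' M_gt0' (pos_INR N) _); last first.
  by rewrite -cdN plus_INR mult_INR.
by move/RleP: l_ge0 => /(card_count_lt_mgf M c k)/RleP; rewrite RpowE.
Qed.

Lemma card_min_count_ge_lb :
  INR d ^ M * (1 - INR d * tail) <= INR #|[pred y : {ffun 'I_M -> 'I_d} | min_count_ge c y]|.
Proof.
have card_split : INR d ^ M = INR #|[pred y : {ffun 'I_M -> 'I_d} | min_count_ge c y]|
    + INR #|[pred y : {ffun 'I_M -> 'I_d} | ~~ min_count_ge c y]|.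
  rewrite RpowE !INRE RplusE -natrX -natrD; congr (_%:R).
  rewrite !card_predE -big_split /= (eq_bigr (fun=> 1%N)) => [|y _].
    by rewrite sum1_card card_ffun !card_ord.
  by case: (min_count_ge c y).
have bad_le :
    INR #|[pred y : {ffun 'I_M -> 'I_d} | ~~ min_count_ge c y]| <= INR d * (INR d ^ M * tail).
  apply: Rle_trans (le_INR _ _ (ssrnat.leP (card_not_min_count_ge d M c))) _.
  set bound := INR d ^ M * tail.
  rewrite !INRE natr_sum; apply: (@Rle_trans _ (\sum_(k : 'I_d) bound)%R).
    by apply/RleP/ler_sum => k _; rewrite -INRE; apply/RleP; exact: card_count_lt_hoeffding.
  by rewrite sumr_const card_ord RmultE mulr_natl; apply: Rle_refl.
lra.
Qed.

End StringCounting.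

(** * The probe state and the decoding channel *)

Section Probe.
Variables (d N M c : nat) (k0 : 'I_d).
Hypothesis cdN : (c * d + N = M)%N.

Local Notation probe := {ffun 'I_N -> 'I_d}.
Local Notation word := {ffun 'I_M -> 'I_d}.
Local Notation space := ((probe * unit) * word)%type.

Definition surplus (y : word) : probe :=
  [ffun i : 'I_N => nth k0 (blocks (fun k => count_mem k (codom y) - c)%N) i].

Lemma codom_surplus (y : word) : min_count_ge c y ->
  codom (surplus y) = blocks (fun k => count_mem k (codom y) - c)%N.
Proof.
move=> /forallP y_ge; apply: codom_nth_ffun; apply/eqP.
rewrite size_blocks -(eqn_add2r (\sum_(k : 'I_d) c)) -big_split /=.
rewrite (eq_bigr (fun k => count_mem k (codom y))) => [|k _]; last by rewrite subnK.
by rewrite sum_count_mem size_codom card_ord sum_nat_const card_ord -cdN addnC mulnC.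
Qed.

Lemma prod_codom_surplus (R : comPzSemiRingType) (F : 'I_d -> R) (y : word) :
  min_count_ge c y ->
  \prod_(a <- codom y) F a = \prod_(a <- codom (surplus y)) F a * \prod_k F k ^+ c.
Proof.
move=> y_ge; rewrite codom_surplus // [LHS]prod_seq_count [X in X * _]prod_seq_count -big_split.
apply: eq_bigr => k _; rewrite count_blocks /= -exprD subnK //.
by move/forallP: y_ge.
Qed.

Definition probe0 : probe := [ffun=> k0].

Definition card_min_count_ge : nat := #|[pred y : word | min_count_ge c y]|.

Definition probe_amplitude : R := / sqrt (INR card_min_count_ge).

Definition probe_vec (s : space) : C :=
  if (s.1.1 == surplus s.2) && min_count_ge c s.2 then RtoC probe_amplitude else 0.

Definition probe_state : Mat space := outer probe_vec.

Definition swap_surplus (p : (probe * word)%type) : space :=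
  ((tperm probe0 (surplus p.2) p.1, tt), p.2).

Definition probe_channel : Mat space -> Mat word := ptrace_perm swap_surplus.

Lemma swap_surplus_bij : bijective swap_surplus.
Proof.
exists (fun s => (tperm probe0 (surplus s.2) s.1.1, s.2)) => [[x y]|[[x []] y]];
  by rewrite /swap_surplus /= tpermK.
Qed.

Lemma probe_channel_is_channel : is_channel probe_channel.
Proof. exact: ptrace_perm_channel swap_surplus_bij. Qed.

Lemma probe_channel_outer (w : probe -> C) :
  probe_channel (outer (fun s => w s.1.1 * probe_vec s)) =
  outer (fun y => if min_count_ge c y then w (surplus y) * RtoC probe_amplitude else 0).
Proof.
apply: ptrace_perm_outer (probe0) _ => x y.
have swapE : (tperm probe0 (surplus y) x == surplus y) = (x == probe0).
  by rewrite -[X in _ == X](tpermL probe0 (surplus y)) (inj_eq (@perm_inj _ _)).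
rewrite /probe_vec /swap_surplus /= swapE; case: eqP => [->|_]; last by rewrite mulr0.
by rewrite tpermL; case: (min_count_ge c y); rewrite ?mulr0.
Qed.

Lemma card_min_count_ge_gt0 : (0 < card_min_count_ge)%N.
Proof.
have d_gt0 : (0 < d)%N by apply: leq_ltn_trans (ltn_ord k0).
have cd_le_M : (c * d <= M)%N by rewrite -cdN leq_addr.
have [y y_ge] := exists_min_count_ge d_gt0 cd_le_M.
by apply/card_gt0P; exists y; rewrite inE.
Qed.

Lemma probe_state_is_state : is_state probe_state.
Proof.
split; first exact: outer_PSD.
have [_ trace_pres _] := probe_channel_is_channel.
have -> : probe_state = outer (fun s => (fun=> 1) s.1.1 * probe_vec s).
  by congr outer; apply: functional_extensionality => s; rewrite mul1r.
rewrite -trace_pres (probe_channel_outer (fun=> 1)) /Mtrace csumE /outer.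
set a := RtoC probe_amplitude.
rewrite (eq_bigr (fun y => if min_count_ge c y then a * a else 0)) => [|y _]; last first.
  by case: ifP; rewrite ?mul0r // mul1r Cconj_RtoC.
rewrite sum_if_const -rmorphM -rmorphMn; congr RtoC.
rewrite /probe_amplitude -mulr_natr -INRE -!RmultE -Rinv_mult sqrt_sqrt; last exact: pos_INR.
by rewrite Rinv_l //; apply/not_0_INR/eqP; rewrite -lt0n card_min_count_ge_gt0.
Qed.

Lemma Vtpow_etheta (theta : nat -> R) (y : word) :
  Vtpow M (etheta d theta) y = RtoC (Rinv (sqrt (INR d)) ^+ M) * \prod_i phase theta (y i).
Proof.
rewrite /Vtpow cprodE (eq_bigr (fun i => RtoC (Rinv (sqrt (INR d))) * phase theta (y i))) //.
by rewrite big_split prodr_const card_ord rmorphXn.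
Qed.

Lemma probe_unitary_diagm (theta : nat -> R) :
  kron (kron (Mtpow N (Utheta d theta)) (Mid unit)) (Mid word)
  = diagm (fun s : space => \prod_i phase theta (s.1.1 i)).
Proof.
rewrite (_ : Utheta d theta = diagm (fun i : 'I_d => phase theta i)) //.
rewrite Mtpow_diagm !Mid_diagm !diagm_kron.
by congr diagm; apply: functional_extensionality => -[[x []] y] /=; rewrite !mulr1.
Qed.

Lemma dotC_etheta_probe (theta : nat -> R) :
  let s := Rinv (sqrt (INR d)) in
  dotC (Vtpow M (etheta d theta))
    (fun y => if min_count_ge c y then \prod_i phase theta (surplus y i) * RtoC probe_amplitude
              else 0)
  = RtoC (card_min_count_ge%:R * s ^+ M * probe_amplitude)
    * Cconj (\prod_(k : 'I_d) phase theta k ^+ c).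
Proof.
move=> s; set Om := \prod_(k : 'I_d) _ ^+ c.
rewrite /dotC (eq_bigr (fun y => if min_count_ge c y then RtoC (s ^+ M * probe_amplitude) * Cconj Om
                                 else 0)).
  by rewrite sum_if_const -mulrnAl -rmorphMn -mulr_natl mulrA.
move=> y _; case: ifP => y_ge; last by rewrite mulr0.
rewrite Vtpow_etheta !(prod_codom (fun k : 'I_d => phase theta k)).
rewrite (prod_codom_surplus (fun k : 'I_d => phase theta k)) //.
set P := \prod_(k <- codom (surplus y)) phase theta k.
have P_unit : unimodular P by apply: unimodular_prod => k; apply: unimodular_phase.
by rewrite !rmorphM /= Cconj_RtoC -mulrA mulrACA P_unit mul1r [Cconj Om * _]mulrC mulrA.
Qed.

Lemma probe_fidelity (theta : nat -> R) :
  let W := kron (kron (Mtpow N (Utheta d theta)) (Mid unit)) (Mid word) in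
  braket (Vtpow M (etheta d theta)) (probe_channel (Mmul (Mmul W probe_state) (Madj W)))
  = RtoC (Rdiv (INR card_min_count_ge) (pow (INR d) M)).
Proof.
rewrite /= probe_unitary_diagm diagmM_outer.
rewrite (probe_channel_outer (fun x => \prod_i phase theta (x i))) braket_outer dotC_etheta_probe.
rewrite RtoC_mul_unimodular; last first.
  by apply/unimodular_conj/unimodular_prod => k; apply/unimodularX/unimodular_phase.
congr RtoC; rewrite -RpowE -INRE /probe_amplitude.
have d_gt0 : (0 < d)%N by apply: leq_ltn_trans (ltn_ord k0).
by apply: scaled_inv_sqrt_sq; apply/lt_0_INR/ssrnat.ltP; first exact: card_min_count_ge_gt0.
Qed.

End Probe.

Lemma d_le_pow_bound (d M : nat) : (1 < d)%N -> (0 < M)%N ->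
  (d <= 2 * (M + 1) ^ ((d * (d - 1)) %/ 2))%N.
Proof.
move=> d_gt1 M_gt0; set K := ((d * (d - 1)) %/ 2)%N.
have dpred_le_K : (d - 1 <= K)%N by rewrite /K leq_divRL // mulnC leq_mul2r d_gt1 orbT.
apply: leq_trans (ltnW (ltn_expl d (ltnSn 1))) _.
rewrite -(subnK (ltnW d_gt1)) addn1 expnS leq_mul2l /=.
apply: leq_trans (leq_pexp2l _ dpred_le_K) _ => //.
by rewrite leq_exp2r ?addn1 ?ltnS // (leq_trans _ dpred_le_K) // subn_gt0.
Qed.

Section FidelityBound.
Local Open Scope R_scope.

Lemma fidelity_ge (d M n K : nat) (B : R) : (1 <= d)%N -> 0 <= B ->
  (d <= 2 * (M + 1) ^ K)%N -> INR d ^ M * (1 - INR d * B) <= INR n ->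
  INR n / INR d ^ M >= 1 - 2 * INR (M + 1) ^ K * B.
Proof.
move=> d_ge1 B_ge0 /ssrnat.leP/le_INR d_le count_ge.
have d_pow_gt0 : 0 < INR d ^ M by apply/pow_lt/lt_0_INR/ssrnat.leP.
have INR2 : INR 2 = 2 by rewrite /=; lra.
rewrite mulnE mult_INR INR2 [INR (_ ^ _)]INRE natrX -INRE -RpowE in d_le.
have : INR d * B <= 2 * INR (M + 1) ^ K * B by apply: Rmult_le_compat_r.
have : 1 - INR d * B <= INR n / INR d ^ M.
  by apply: (Rmult_le_reg_r _ _ _ d_pow_gt0); rewrite /Rdiv Rmult_assoc Rinv_l; lra.
lra.
Qed.

End FidelityBound.

Local Close Scope ring_scope.
Local Open Scope R_scope.

Theorem mainTheorem7 (d N M : nat)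
  (hd : (2 <= d)%N) (hN : (1 <= N)%N) (hNM : (N <= M)%N) (hdiv : (d %| M - N)%N) :
  exists (A : finType)
         (sigma : Mat (({ffun 'I_N -> 'I_d} * A) * {ffun 'I_M -> 'I_d})%type)
         (Chan : Mat (({ffun 'I_N -> 'I_d} * A) * {ffun 'I_M -> 'I_d})%type ->
                 Mat {ffun 'I_M -> 'I_d}),
    is_state sigma /\ is_channel Chan /\
    forall theta : nat -> R,
      (forall k : nat, (1 <= k)%N -> (k <= d - 1)%N -> 0 <= theta k < 2 * PI) ->
      let W := kron (kron (Mtpow N (Utheta d theta)) (Mid A)) (Mid {ffun 'I_M -> 'I_d}) in
      let z := braket (Vtpow M (etheta d theta))
                      (Chan (Mmul (Mmul W sigma) (Madj W))) in
      im z = 0 /\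
      re z >= 1 - 2 * INR (M + 1) ^ ((d * (d - 1)) %/ 2)%N
                    * exp (- (2 * INR N ^ 2) / (INR d ^ 2 * INR M)).
Proof.
have d_gt0 : (0 < d)%N by apply: leq_trans hd.
have M_gt0 : (0 < M)%N by apply: leq_trans hNM.
have cdN : (((M - N) %/ d) * d + N = M)%N by rewrite divnK // subnK.
pose k0 : 'I_d := Ordinal d_gt0.
exists unit, (@probe_state d N M ((M - N) %/ d) k0), (@probe_channel d N M ((M - N) %/ d) k0).
split; first exact: probe_state_is_state cdN.
split; first exact: probe_channel_is_channel.
move=> theta _ W z; rewrite /z /W (probe_fidelity k0 cdN theta); split; first by [].
apply: fidelity_ge (ltnW hd) (Rlt_le _ _ (exp_pos _)) (d_le_pow_bound hd M_gt0) _.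
exact: card_min_count_ge_lb (ltnW hd) M_gt0 cdN.
Qed.
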